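(* Let $X$ be a continuum (nonempty compact connected metric space) and $f: X \rightarrow X$ a homeomorphism. If $f$ admits a special dendrite, then $h(C(f))=\infty$, and therefore $h(2^f)=\infty$.
   Context: $2^X$ (resp. $C(X)$) is the hyperspace of nonempty closed (resp. nonempty compact connected) subsets of $X$ with the Hausdorff metric, $2^f(A)=f(A)$, $C(f)=2^f|_{C(X)}$; $h$ is topological entropy. Special dendrite: in $\mathbb{R}^2$ let $p=(-1,0)$, $q=(1,0)$, $a_0=0$, $a_n=1-\frac{1}{n+1}$, $a_{-n}=-a_n$ ($n\ge1$), $L_n=\{a_n\}\times[0,\frac{1}{|n|+1}]$, $X_0=([-1,1]\times\{0\})\cup\bigcup_{n}L_n$. Let $F:X_0\to X_0$ be a homeomorphism such that $F|_{[-1,1]\times\{0\}}$ is a homeomorphism of the segment with $F(p)=p$, $F(q)=q$, $F((a_n,0))=(a_{n+1},0)$, and $F|_{L_n}:L_n\to L_{n+1}$ is a linear homeomorphism for each $n$. $f$ admits a special dendrite if there are a closed $\Lambda\subset X$ and $k\in\mathbb{N}$ with $\Lambda$ $f^k$-invariant and $f^k|_\Lambda$ topologically conjugate to $F$. *)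

From HB Require Import structures.
From mathcomp Require Import all_boot all_order all_algebra.
From mathcomp Require Import all_classical all_reals all_analysis.
Set Implicit Arguments. Unset Strict Implicit. Unset Printing Implicit Defensive.
Import Order.TTheory GRing.Theory Num.Theory numFieldTopology.Exports numFieldNormedType.Exports.
Local Open Scope classical_set_scope.
Local Open Scope ring_scope.

Section Hyperspace.
Context {R : realType} {X : metricType R}.

Definition pt_set_dist (x : X) (B : set X) : R := inf [set mdist x b | b in B].

Definition hausdorff_dist (A B : set X) : R :=
  Num.max (sup [set pt_set_dist a B | a in A]) (sup [set pt_set_dist b A | b in B]).

Definition hyper2 : set (set X) := [set A | A !=set0 /\ closed A].
Definition hyperC : set (set X) := [set A | A !=set0 /\ compact A /\ connected A].

(** induced map 2^f (and C(f) is its restriction to C(X)) *)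
Definition induced_map (f : X -> X) : set X -> set X := fun A => f @` A.

End Hyperspace.

Section Entropy.
Context {R : realType} {T : Type}.
Local Open Scope ereal_scope.

Definition eln (x : \bar R) : \bar R :=
  match x with r%:E => (ln r)%:E | +oo => +oo | -oo => -oo end.

Definition separated_family (d : T -> T -> R) (g : T -> T) (K : set T)
  (n : nat) (eps : R) (m : nat) (s : 'I_m -> T) : Prop :=
  (forall i, K (s i)) /\
  (forall i j, i != j -> exists k, (k < n)%N /\ (eps < d (iter k g (s i)) (iter k g (s j)))%R).

Definition sep_number d g K n eps : \bar R :=
  ereal_sup [set (m%:R)%:E | m in [set m : nat | exists s : 'I_m -> T, separated_family d g K n eps s]].

Definition top_entropy d g K : \bar R :=
  ereal_sup [set limn_esup (fun n : nat => ((n%:R)^-1)%R%:E * eln (sep_number d g K n eps))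
            | eps in [set e : R | (0 < e)%R]].

End Entropy.

Section SpecialDendrite.
Context {R : realType}.
Local Open Scope ring_scope.

Definition dend_a (n : int) : R := (Num.sg n)%:~R * (1 - (`|n|%:~R + 1)^-1).

Definition dend_L (n : int) : set (R * R) :=
  [set p | p.1 = dend_a n /\ 0 <= p.2 <= (`|n|%:~R + 1)^-1].

Definition dend_seg : set (R * R) := [set p | p.2 = 0 /\ -1 <= p.1 <= 1].

Definition dend_X0 : set (R * R) := dend_seg `|` \bigcup_(n in [set: int]) dend_L n.

Definition homeo_on {U V : topologicalType} (A : set U) (B : set V) (h : U -> V) : Prop :=
  {within A, continuous h} /\ h @` A = B /\
  (forall x y, A x -> A y -> h x = h y -> x = y) /\
  exists g : V -> U, {within B, continuous g} /\ g @` B = A /\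
    (forall x, A x -> g (h x) = x) /\ (forall y, B y -> h (g y) = y).

Definition special_dendrite_map (F : R * R -> R * R) : Prop :=
  homeo_on dend_X0 dend_X0 F /\
  homeo_on dend_seg dend_seg F /\
  F (-1, 0) = (-1, 0) /\ F (1, 0) = (1, 0) /\
  (forall n : int, F (dend_a n, 0) = (dend_a (n + 1), 0)) /\
  (forall n : int, homeo_on (dend_L n) (dend_L (n + 1)) F /\
     exists alpha beta : R, forall p, dend_L n p ->
       F p = (dend_a (n + 1), alpha * p.2 + beta)).

Definition admits_special_dendrite {X : metricType R} (f : X -> X)
  (F : R * R -> R * R) : Prop :=
  exists (Lam : set X) (k : nat), closed Lam /\ (0 < k)%N /\
    (iter k f) @` Lam `<=` Lam /\
    exists phi : X -> R * R, homeo_on Lam dend_X0 phi /\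
      forall x, Lam x -> phi (iter k f x) = F (phi x).

End SpecialDendrite.

From HB Require Import structures.
From mathcomp Require Import all_boot all_order all_algebra.
From mathcomp Require Import all_classical all_reals all_analysis.
From mathcomp Require Import lra zify.
Import Order.TTheory GRing.Theory Num.Theory numFieldTopology.Exports numFieldNormedType.Exports.
Local Open Scope classical_set_scope.
Local Open Scope ring_scope.
Set Implicit Arguments. Unset Strict Implicit. Unset Printing Implicit Defensive.

(** Cut each of the arms L_0, L_-1, ..., L_-(q-1) of the special dendrite at one
    of the heights 0, 1/N, ..., 1 of the arm: together with the spine this gives
    (N+1)^q subcontinua of X_0, hence of X through the conjugacy.  Since F^p moves
    L_-p onto L_0 and keeps every other arm at horizontal distance >= 1/2 from
    L_0, two such subcontinua that differ on the arm L_-p are mapped by f^(kp) to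
    sets at Hausdorff distance bounded below by a constant depending only on N
    (continuity of the conjugacy at the N+1 grid points of L_0).  So C(f) has
    (N+1)^q subcontinua that are (kq, eps_N)-separated, whence
    h(C(f)) >= ln(N+1) / (2k) for every N; and C(X) is a subset of 2^X. *)

Lemma within_continuous_ball_finite {R : realType} {X Y : pseudoMetricType R}
    (I : finType) (A : set X) (phi : X -> Y) (x : I -> X) (c : R) :
  {within A, continuous phi} -> (forall i, A (x i)) -> 0 < c ->
  exists2 d, 0 < d & forall i y, A y -> ball (x i) d y -> ball (phi (x i)) c (phi y).
Proof.
move=> phic Ax c0.
have near_x i : \forall d \near 0^'+,
    forall y, A y -> ball (x i) d y -> ball (phi (x i)) c (phi y).
  have := (proj1 (subspace_continuousP _ _) phic) _ (Ax i) _ (nbhsx_ballx (phi (x i)) c c0).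
  rewrite /= nbhs_simpl /= => /nbhs_ballP[e e0 xe].
  near=> d => y Ay xy; apply: xe => //; apply: le_ball xy.
  by near: d; apply: nbhs_right_le.
have [d [d0 xd]] := filter_ex
  (proj2 (near_andP _ _ _) (conj (nbhs_right_gt 0) (filter_forall _ near_x))).
by exists d.
Unshelve. all: by end_near.
Qed.

Lemma compact_bigcup_finite {T : topologicalType} (I : finType) (B : I -> set T) :
  (forall i, compact (B i)) -> compact (\bigcup_i B i).
Proof.
move=> cB; have -> : \bigcup_i B i = \bigcup_(i in [set` enum I]) B i.
  by congr bigcup; apply/seteqP; split => i //= _; rewrite mem_enum.
by rewrite bigcup_seq; apply: bigsetU_compact => i _; exact: cB.
Qed.

(* The pieces A `|` B i and A itself (index None) share every point of A. *)
Lemma connectedU_bigcup {T : topologicalType} (I : Type) (D : set I)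
    (A : set T) (B : I -> set T) :
  A !=set0 -> connected A ->
  (forall i, D i -> connected (B i) /\ A `&` B i !=set0) ->
  connected (A `|` \bigcup_(i in D) B i).
Proof.
move=> [a Aa] cA cB.
pose P (o : option I) := if o is Some i then D i else True.
pose C (o : option I) := A `|` (if o is Some i then B i else set0).
have -> : A `|` \bigcup_(i in D) B i = \bigcup_(o in P) C o.
  apply/seteqP; split => x.
    by case=> [Ax|[i Di Bx]]; [exists None => //; left | exists (Some i) => //; right].
  by case=> -[i|] /= Po [Ax|Bx]; [left|right; exists i|left|].
apply: bigcup_connected; first by exists a => o _; left.
move=> [i|] Po; last by rewrite /C setU0.
by have [cBi ABi] := cB i Po; apply: connectedU.
Qed.

Section SegmentImage.
Context {R : realType} {T : topologicalType} (f : R -> T) (a b : R).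
Hypothesis fc : continuous f.

Lemma compact_segment_image : compact (f @` `[a, b]).
Proof.
by apply: continuous_compact; [exact: continuous_subspaceT | exact: segment_compact].
Qed.

Lemma connected_segment_image : connected (f @` `[a, b]).
Proof.
apply: connected_continuous_connected; first exact: segment_connected.
exact: continuous_subspaceT.
Qed.

End SegmentImage.

Section Hyperspace.
Context {R : realType} {X : metricType R}.

Lemma pt_set_dist_ge (x : X) (B : set X) d : B !=set0 ->
  (forall b, B b -> d <= mdist x b) -> d <= pt_set_dist x B.
Proof.
move=> [b0 Bb0] dB; apply: lb_le_inf; first by exists (mdist x b0), b0.
by move=> _ [b Bb <-]; exact: dB.
Qed.

Lemma pt_set_dist_le (x : X) (B : set X) b : B b -> pt_set_dist x B <= mdist x b.
Proof.
move=> Bb; apply: ge_inf; last by exists b.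
by exists 0 => _ [c _ <-]; exact: mdist_ge0.
Qed.

Lemma hausdorff_distC (A B : set X) : hausdorff_dist A B = hausdorff_dist B A.
Proof. by rewrite /hausdorff_dist maxC. Qed.

(* Without a bound on the distances, the [sup] in [hausdorff_dist] could be the
   junk value of an unbounded set. *)
Lemma hausdorff_dist_ge (M : R) (A B : set X) x d :
  (forall a b : X, mdist a b <= M) ->
  A x -> B !=set0 -> (forall b, B b -> d <= mdist x b) -> d <= hausdorff_dist A B.
Proof.
move=> XM Ax B0 dB; rewrite /hausdorff_dist le_max (le_trans (pt_set_dist_ge B0 dB)) //.
apply: ub_le_sup; last by exists x.
have [b Bb] := B0; exists M => _ [a _ <-].
exact: le_trans (pt_set_dist_le a Bb) (XM a b).
Qed.

Lemma continuous_mdist (x : X) : continuous (fun y : X => mdist x y : R^o).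
Proof.
move=> y; apply/cvgrPdist_lt => e e0; near=> z.
have yz : mdist y z < e by near: z; apply/nbhs_ballP; exists e => // w; rewrite ballEmdist.
apply: le_lt_trans yz; rewrite ler_norml.
have := metric_triangle x y z; have := metric_triangle x z y.
by rewrite (metric_sym z y) => ? ?; apply/andP; split; lra.
Unshelve. all: by end_near.
Qed.

Lemma compact_mdist_bounded : compact [set: X] ->
  exists M : R, forall a b : X, mdist a b <= M.
Proof.
move=> cX; have [[x0 _]|X0] := pselect ([set: X] !=set0); last first.
  by exists 0 => a; exfalso; apply: X0; exists a.
have [M [_ BM]] := compact_bounded
  (continuous_compact (continuous_subspaceT (@continuous_mdist x0)) cX).
have distM a : mdist x0 a <= `|M| + 1.
  apply: le_trans (ler_norm _) (BM _ _ _ _); last by exists a.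
  by rewrite (le_lt_trans (ler_norm M)) ?ltrDl.
exists ((`|M| + 1) *+ 2) => a b; rewrite mulr2n.
by apply: le_trans (metric_triangle a x0 b) _; rewrite metric_sym lerD.
Qed.

Lemma hyperC_sub_hyper2 : @hyperC R X `<=` hyper2.
Proof.
by move=> A [A0 [cA _]]; split => //; exact: compact_closed (@metric_hausdorff _ _) cA.
Qed.

Lemma iter_induced_map (f : X -> X) n (A : set X) :
  iter n (induced_map f) A = iter n f @` A.
Proof.
elim: n => [|n IH] /=; first by rewrite image_id.
by rewrite IH /induced_map image_comp.
Qed.

End Hyperspace.

Lemma leq_double_divn k n : (0 < k)%N -> (k <= n)%N -> (n <= 2 * k * (n %/ k))%N.
Proof.
move=> k0 kn; have q0 : (0 < n %/ k)%N by rewrite divn_gt0.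
have := ltn_pmod n k0; rewrite {1}(divn_eq n k); nia.
Qed.

Lemma natr_div_itv01 {R : realType} (v N : nat) :
  (0 < N)%N -> (v <= N)%N -> 0 <= (v%:R / N%:R : R) <= 1.
Proof. by move=> N0 vN; rewrite divr_ge0 ?ler0n //= ler_pdivrMr ?ltr0n // mul1r ler_nat. Qed.

Lemma ln_natS_unbounded {R : realType} (A : R) : exists2 N : nat, (0 < N)%N & A <= ln N.+1%:R.
Proof.
exists (Num.truncn (expR A)).+1 => //.
rewrite -[A in A <= _]expRK ler_ln ?posrE ?expR_gt0 ?ltr0n //.
by apply: le_trans (ltW (truncnS_gt _)) _; rewrite ler_nat.
Qed.

Section Entropy.
Context {R : realType} {T : Type}.
Implicit Types (d : T -> T -> R) (g : T -> T) (K : set T).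

Lemma separated_familyS d g K K' n n' eps m (s : 'I_m -> T) :
  K `<=` K' -> (n <= n')%N ->
  separated_family d g K n eps s -> separated_family d g K' n' eps s.
Proof.
move=> KK' nn' [Ks sep]; split=> [i|i j ij]; first exact: KK'.
by have [l [ln epsl]] := sep i j ij; exists l; split => //; exact: leq_trans nn'.
Qed.

Lemma sep_number_ge d g K n eps m (s : 'I_m -> T) :
  separated_family d g K n eps s -> ((m%:R)%:E <= sep_number d g K n eps)%E.
Proof. by move=> sep; apply: ereal_sup_ubound; exists m => //; exists s. Qed.

Lemma top_entropy_ge d g K (k B : nat) eps :
  (0 < k)%N -> (0 < B)%N -> 0 < eps ->
  (forall q, exists s : 'I_(B ^ q) -> T, separated_family d g K (k * q) eps s) ->
  ((ln B%:R / (2 * k%:R))%:E <= top_entropy d g K)%E.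
Proof.
move=> k0 B0 eps0 sepB.
apply: le_trans (ereal_sup_ubound _); last by exists eps.
rewrite limn_esup_lim; apply: lime_ge; first exact: is_cvg_esups.
near=> n; apply: le_trans (ereal_sup_ubound _); last by exists n => /=.
have kn : (k <= n)%N by near: n; exists k.
have n0 : 0 < n%:R :> R by rewrite ltr0n (leq_trans k0).
have [s /(separated_familyS (@subset_refl _ K) _)] := sepB (n %/ k)%N.
move=> /(_ n); rewrite mulnC leq_divM => /(_ isT)/sep_number_ge.
case: (sep_number d g K n eps) => [r||] //=; last first.
  by rewrite gt0_muley ?leey // lte_fin invr_gt0.
rewrite !lee_fin => Br; rewrite natrX in Br.
have lnB : 0 <= ln B%:R :> R by rewrite ln_ge0 // ler1n.
have lnr : (n %/ k)%:R * ln B%:R <= ln r.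
  rewrite mulr_natl -lnXn ?ltr0n // ler_ln ?posrE ?exprn_gt0 ?ltr0n //.
  by apply: lt_le_trans Br; rewrite exprn_gt0 ?ltr0n.
have nq : n%:R <= 2 * k%:R * (n %/ k)%:R :> R.
  by rewrite -!natrM ler_nat leq_double_divn.
have nV : n%:R * n%:R^-1 = 1 :> R by rewrite mulfV ?gt_eqF.
have V0 : 0 < n%:R^-1 :> R by rewrite invr_gt0.
rewrite ler_pdivrMr ?mulr_gt0 ?ltr0n //.
have := mulr_ge0 (ltW V0) (ler0n R k); have := mulr_ge0 (ltW V0) lnB.
nra.
Unshelve. all: by end_near.
Qed.

End Entropy.

Section DendriteGeometry.
Context {R : realType}.

Definition dend_h (n : int) : R := (`|n|%:~R + 1)^-1.

Lemma dend_h_gt0 n : 0 < dend_h n.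
Proof. by rewrite invr_gt0 ltr_wpDl // ler0z. Qed.

Lemma dend_h0 : dend_h 0 = 1.
Proof. by rewrite /dend_h normr0 add0r invr1. Qed.

Lemma dend_h_le1 n : dend_h n <= 1.
Proof. by rewrite invf_le1 ?ltr_wpDl ?lerDr ?ler0z. Qed.

Lemma dend_h_le_half n : n != 0 -> dend_h n <= 2^-1.
Proof.
move=> n0; rewrite lef_pV2 ?posrE ?ltr_wpDl ?ler0z // -[2]/(1 + 1) lerD2r ler1z.
by rewrite -gtz0_ge1 normr_gt0.
Qed.

Lemma dend_a0 : dend_a 0 = 0 :> R.
Proof. by rewrite /dend_a sgr0 mul0r. Qed.

Lemma dend_a_norm n : `|dend_a n : R| = (n != 0)%:R * (1 - dend_h n).
Proof.
rewrite normrM intr_sg normr_sg intr_eq0 ger0_norm // subr_ge0.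
exact: dend_h_le1.
Qed.

Lemma dend_a_norm_le1 n : `|dend_a n : R| <= 1.
Proof.
rewrite dend_a_norm; have := dend_h_gt0 n.
by case: (n != 0); rewrite ?mul1r ?mul0r //; lra.
Qed.

Lemma dend_a_norm_ge_half n : n != 0 -> 2^-1 <= `|dend_a n : R|.
Proof. by move=> n0; rewrite dend_a_norm n0 mul1r; have := dend_h_le_half n0; lra. Qed.

Lemma dend_L_scale n s : 0 <= s <= 1 -> dend_L n (dend_a n, s * dend_h n).
Proof.
move=> /andP[s0 s1]; split=> //=; rewrite -/(dend_h n).
by have := dend_h_gt0 n => h0; apply/andP; split; nra.
Qed.

Lemma dend_L_top n : dend_L n (dend_a n, dend_h n).
Proof. by rewrite -[dend_h n]mul1r; apply: dend_L_scale; rewrite lexx ler01. Qed.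

Section Subdendrite.

Definition dend_spine : set (R * R) := (fun x : R => (x, 0)) @` `[-1, 1].

Definition dend_arm (n : int) (c : R) : set (R * R) :=
  (fun s : R => (dend_a n, s * dend_h n)) @` `[0, c].

Definition subdendrite (q : nat) (h : 'I_q -> R) : set (R * R) :=
  dend_spine `|` \bigcup_(i : 'I_q) dend_arm (- (i : nat)%:Z) (h i).

Lemma dend_spine00 : dend_spine (0, 0).
Proof. by exists 0 => //=; rewrite in_itv /= lerN10 ler01. Qed.

Lemma dend_spine_seg : dend_spine `<=` dend_seg.
Proof. by move=> _ [x /= /[!in_itv] /= x11 <-]. Qed.

Lemma continuous_spine_param : continuous (fun x : R => (x, 0 : R)).
Proof.
move=> x; apply: (@cvg_pair _ _ _ _ (nbhs x) (nbhs (0 : R))).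
  exact: cvg_id.
exact: cvg_cst.
Qed.

Lemma continuous_arm_param n : continuous (fun s : R => (dend_a n : R, s * dend_h n)).
Proof.
move=> s; apply: (@cvg_pair _ _ _ _ (nbhs (dend_a n : R)) (nbhs (s * dend_h n))).
  exact: cvg_cst.
by apply: cvgM; [exact: cvg_id | exact: cvg_cst].
Qed.

Variables (q : nat) (h : 'I_q -> R).
Hypothesis h01 : forall i, 0 <= h i <= 1.

Lemma subdendrite_X0 : subdendrite h `<=` dend_X0.
Proof.
move=> p [/dend_spine_seg|[i _ [s /= /[!in_itv]/= /andP[s0 si] <-]]]; first by left.
right; exists (- (i : nat)%:Z) => //; apply: dend_L_scale.
by rewrite s0 (le_trans si) //; case/andP: (h01 i).
Qed.

Lemma subdendrite00 : subdendrite h (0, 0).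
Proof. by left; exact: dend_spine00. Qed.

Lemma subdendrite_arm_top (i : 'I_q) :
  subdendrite h (dend_a (- (i : nat)%:Z), h i * dend_h (- (i : nat)%:Z)).
Proof.
right; exists i => //; exists (h i) => //=.
by rewrite in_itv /= lexx andbT; case/andP: (h01 i).
Qed.

Lemma subdendriteP p : subdendrite h p -> dend_seg p \/
  exists (i : 'I_q) s, 0 <= s <= h i /\
    p = (dend_a (- (i : nat)%:Z), s * dend_h (- (i : nat)%:Z)).
Proof.
case=> [/dend_spine_seg|[i _ [s /= /[!in_itv]/= si <-]]]; first by left.
by right; exists i, s.
Qed.

Lemma compact_subdendrite : compact (subdendrite h).
Proof.
apply: compactU; first exact: compact_segment_image continuous_spine_param.
apply: compact_bigcup_finite => i; apply: compact_segment_image.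
exact: continuous_arm_param.
Qed.

Lemma connected_subdendrite : connected (subdendrite h).
Proof.
apply: connectedU_bigcup; first by exists (0, 0); exact: dend_spine00.
  exact: connected_segment_image continuous_spine_param.
move=> i _; split; first by apply: connected_segment_image; exact: continuous_arm_param.
exists (dend_a (- (i : nat)%:Z), 0); split.
  by exists (dend_a (- (i : nat)%:Z)) => //=; rewrite in_itv /= -ler_norml dend_a_norm_le1.
by exists 0; rewrite ?mul0r //= in_itv /= lexx; case/andP: (h01 i).
Qed.

End Subdendrite.

Section SpecialDendriteMap.
Variable F : R * R -> R * R.
Hypothesis HF : special_dendrite_map F.

Lemma special_dendrite_map_X0 p : dend_X0 p -> dend_X0 (F p).
Proof. by case: HF => -[_ [imF _]] _ X0p; rewrite -imF; exists p. Qed.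

Lemma special_dendrite_map_seg p : dend_seg p -> dend_seg (F p).
Proof. by case: HF => _ [[_ [imF _]] _] segp; rewrite -imF; exists p. Qed.

(* An affine map of L_n onto L_(n+1) fixing the foot (a_n, 0) scales heights
   by h_(n+1) / h_n. *)
Lemma special_dendrite_map_arm n s : 0 <= s <= 1 ->
  F (dend_a n, s * dend_h n) = (dend_a (n + 1), s * dend_h (n + 1)).
Proof.
move=> s01; case: HF => _ [_ [_ [_ [Ffoot FL]]]].
have [[_ [imF _]] [al [be Faff]]] := FL n.
have h0 := dend_h_gt0 n; have h1 := dend_h_gt0 (n + 1).
have be0 : be = 0.
  have := Faff _ (@dend_L_scale n 0 ltac:(lra)).
  by rewrite mul0r Ffoot mulr0 add0r => -[].
rewrite Faff; last exact: dend_L_scale.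
rewrite be0 addr0 mulrCA; congr (_, _ * _).
have top_le : al * dend_h n <= dend_h (n + 1).
  have : dend_L (n + 1) (F (dend_a n, dend_h n)).
    by rewrite -imF; exists (dend_a n, dend_h n) => //; apply: dend_L_top.
  by rewrite Faff ?be0 ?addr0 => [[_ /andP[]]|]; last exact: dend_L_top.
have [p [_ /andP[p0 ph]] Fp] : exists2 p, dend_L n p & al * p.2 = dend_h (n + 1).
  have := dend_L_top (n + 1); rewrite -imF => -[p Lp Fp]; exists p => //.
  by move: Fp; rewrite Faff // be0 addr0 => -[].
have al0 : 0 <= al by rewrite leNgt; apply/negP => al0; nra.
by apply/eqP; rewrite eq_le top_le -Fp ler_wpM2l.
Qed.

Lemma iter_special_dendrite_map_arm n s (j : nat) : 0 <= s <= 1 ->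
  iter j F (dend_a n, s * dend_h n) = (dend_a (n + j%:Z), s * dend_h (n + j%:Z)).
Proof.
move=> s01; elim: j => [|j IH]; first by rewrite addr0.
by rewrite iterS IH special_dendrite_map_arm // -addn1 PoszD addrA.
Qed.

Lemma iter_special_dendrite_map_X0 j p : dend_X0 p -> dend_X0 (iter j F p).
Proof. by move=> X0p; elim: j => // j IH; rewrite iterS; exact: special_dendrite_map_X0. Qed.

Lemma iter_special_dendrite_map_seg j p : dend_seg p -> dend_seg (iter j F p).
Proof. by move=> segp; elim: j => // j IH; rewrite iterS; exact: special_dendrite_map_seg. Qed.

(* After p steps the arm L_-p has become L_0 and every other arm lies at
   horizontal distance at least 1/2 from L_0. *)
Lemma iter_subdendrite_arm_top q (h : 'I_q -> R) (p : 'I_q) : 0 <= h p <= 1 ->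
  iter p F (dend_a (- (p : nat)%:Z), h p * dend_h (- (p : nat)%:Z)) = (0, h p).
Proof. by move=> hp01; rewrite iter_special_dendrite_map_arm // addNr dend_a0 dend_h0 mulr1. Qed.

Lemma iter_subdendrite_not_ball q (h : 'I_q -> R) (p : 'I_q) (r c : R) y :
  (forall i, 0 <= h i <= 1) -> c <= 2^-1 -> h p + c <= r ->
  subdendrite h y -> ~ ball (0, r) c (iter p F y).
Proof.
move=> h01 c_half hpr /subdendriteP[segy|[i [s [/andP[s0 si] ->]]]] [].
  have [-> _] := iter_special_dendrite_map_seg p segy.
  rewrite /ball /= subr0 => _ rc; have := ler_norm r.
  by have := h01 p; lra.
have s01 : 0 <= s <= 1 by rewrite s0 (le_trans si) //; case/andP: (h01 i).
rewrite iter_special_dendrite_map_arm // /ball /=.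
have [eip|ip] := eqVneq i p.
  subst i; rewrite addNr dend_a0 dend_h0 mulr1 => _ rs; have := ler_norm (r - s).
  by lra.
rewrite sub0r normrN => ac _.
have : - (i : nat)%:Z + (p : nat)%:Z != 0.
  by rewrite addrC subr_eq0 eqz_nat; apply: contra ip => /eqP/val_inj ->.
by move/dend_a_norm_ge_half; lra.
Qed.

End SpecialDendriteMap.
End DendriteGeometry.

Definition grid_heights {R : realType} (N q : nat) (t : 'I_q -> 'I_N.+1) : 'I_q -> R :=
  fun i => (t i)%:R / N%:R.

Lemma grid_heights01 {R : realType} (N q : nat) (t : 'I_q -> 'I_N.+1) :
  (0 < N)%N -> forall i, 0 <= (grid_heights t i : R) <= 1.
Proof. by move=> N0 i; apply: natr_div_itv01; rewrite // -ltnS. Qed.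

Lemma grid_heights_gap {R : realType} (N q : nat) (t t' : 'I_q -> 'I_N.+1) p :
  (0 < N)%N -> (t' p < t p)%N -> grid_heights t' p + (2 * N%:R)^-1 <= (grid_heights t p : R).
Proof.
move=> N0 tp; have tp1 : (t' p)%:R + 1 <= (t p)%:R :> R by rewrite natr1 ler_nat.
have w0 : 0 < N%:R^-1 :> R by rewrite invr_gt0 ltr0n.
have := ler_wpM2r (ltW w0) tp1.
by rewrite /grid_heights invfM; lra.
Qed.

Section Conjugacy.
Context {R : realType} {X : metricType R}.
Variables (f : X -> X) (F : R * R -> R * R) (Lam : set X) (k : nat)
  (phi : X -> R * R) (g : R * R -> X).
Hypothesis HF : special_dendrite_map F.
Hypothesis Lam_inv : iter k f @` Lam `<=` Lam.
Hypothesis phi_conj : forall x, Lam x -> phi (iter k f x) = F (phi x).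
Hypothesis phi_cont : {within Lam, continuous phi}.
Hypothesis g_cont : {within dend_X0, continuous g}.
Hypothesis g_X0 : g @` dend_X0 = Lam.
Hypothesis phiK : forall x, Lam x -> g (phi x) = x.
Hypothesis gK : forall y, dend_X0 y -> phi (g y) = y.

Lemma g_Lam y : dend_X0 y -> Lam (g y).
Proof. by move=> X0y; rewrite -g_X0; exists y. Qed.

Lemma iter_conj m y : dend_X0 y -> iter (k * m) f (g y) = g (iter m F y).
Proof.
move=> X0y; elim: m => [|m IH]; first by rewrite muln0.
have X0Fy := iter_special_dendrite_map_X0 HF m X0y.
have Lam_fk : Lam (iter k f (g (iter m F y))).
  by apply: Lam_inv; exists (g (iter m F y)) => //; exact: g_Lam.
rewrite mulnS iterD IH -[LHS](phiK Lam_fk) phi_conj; last exact: g_Lam.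
by rewrite gK.
Qed.

Lemma subcontinuum_hyperC q (h : 'I_q -> R) : (forall i, 0 <= h i <= 1) ->
  hyperC (g @` subdendrite h).
Proof.
move=> h01; have g_cont_h := continuous_subspaceW (subdendrite_X0 h01) g_cont.
split; first by exists (g (0, 0)), (0, 0) => //; exact: subdendrite00.
split; first by apply: continuous_compact g_cont_h _; exact: compact_subdendrite.
by apply: connected_continuous_connected g_cont_h; exact: connected_subdendrite.
Qed.

Lemma iter_subcontinuum_arm_top q (h : 'I_q -> R) (p : 'I_q) :
  (forall i, 0 <= h i <= 1) -> (iter (k * p) f @` (g @` subdendrite h)) (g (0, h p)).
Proof.
move=> h01; pose y : R * R := (dend_a (- (p : nat)%:Z), h p * dend_h (- (p : nat)%:Z)).
have h_y : subdendrite h y := subdendrite_arm_top h01 p.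
exists (g y); first by exists y.
rewrite iter_conj; last exact: (subdendrite_X0 h01 h_y).
by rewrite iter_subdendrite_arm_top.
Qed.

Variable M : R.
Hypothesis XM : forall a b : X, mdist a b <= M.
Hypothesis k0 : (0 < k)%N.

Section Grid.
Variable N : nat.
Hypothesis N0 : (0 < N)%N.

Lemma subcontinua_separated : exists2 d, 0 < d & forall q (t t' : 'I_q -> 'I_N.+1) p,
  (t' p < t p)%N ->
  d <= hausdorff_dist (iter (k * p) (induced_map f) (g @` subdendrite (grid_heights t)))
                      (iter (k * p) (induced_map f) (g @` subdendrite (grid_heights t'))).
Proof.
pose c : R := (2 * N%:R)^-1.
have c0 : 0 < c by rewrite invr_gt0 mulr_gt0 ?ltr0n.
pose level (v : 'I_N.+1) : R * R := (0, v%:R / N%:R).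
have X0_level v : dend_X0 (level v).
  right; exists 0 => //; have := @dend_L_scale R 0 (v%:R / N%:R).
  by rewrite dend_a0 dend_h0 mulr1; apply; apply: natr_div_itv01; rewrite // -ltnS.
have [d d0 near_level] := within_continuous_ball_finite phi_cont
  (fun v => g_Lam (X0_level v)) c0.
exists d => // q t t' p tp; rewrite !iter_induced_map.
have t01 := grid_heights01 (R := R) t N0; have t'01 := grid_heights01 (R := R) t' N0.
have top := iter_subcontinuum_arm_top p t01.
apply: (hausdorff_dist_ge XM top).
  exists (iter (k * p) f (g (0, 0))), (g (0, 0)) => //.
  by exists (0, 0) => //; exact: subdendrite00.
move=> _ [_ [y t'y <-] <-].
have X0y := subdendrite_X0 t'01 t'y; rewrite iter_conj // leNgt; apply/negP => near_y.
have := near_level (t p) _ (g_Lam (iter_special_dendrite_map_X0 HF p X0y)).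
rewrite ballEmdist => /(_ near_y); rewrite !gK //; last exact: iter_special_dendrite_map_X0.
have N1 : 1 <= N%:R :> R by rewrite ler1n.
apply: (iter_subdendrite_not_ball HF t'01 _ (grid_heights_gap N0 tp) t'y).
by rewrite lef_pV2 ?posrE ?mulr_gt0 ?ltr0n // ler_peMr.
Qed.

Lemma separated_subcontinua : exists2 eps, 0 < eps & forall q,
  exists s : 'I_(N.+1 ^ q)%N -> set X,
    separated_family hausdorff_dist (induced_map f) hyperC (k * q) eps s.
Proof.
have [d d0 sep] := subcontinua_separated.
exists (d / 2); first by rewrite divr_gt0.
move=> q; have card_grid : #|{ffun 'I_q -> 'I_N.+1}| = (N.+1 ^ q)%N.
  by rewrite card_ffun !card_ord.
pose grid (i : 'I_(N.+1 ^ q)%N) := enum_val (cast_ord (esym card_grid) i).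
exists (fun i => g @` subdendrite (grid_heights (grid i))); split.
  by move=> i; apply: subcontinuum_hyperC; exact: grid_heights01.
move=> i j ij; have /eqP : grid i != grid j.
  by apply: contra ij => /eqP/enum_val_inj/cast_ord_inj ->.
move=> /ffunP/existsNP[p /eqP tp]; exists (k * p)%N; split; first by rewrite ltn_pmul2l.
apply: lt_le_trans (_ : d / 2 < d) _; first by lra.
case: (ltngtP (grid j p) (grid i p)) => [ji|ij'|/val_inj eq_ji]; first exact: sep.
  by rewrite hausdorff_distC; exact: sep.
by rewrite eq_ji eqxx in tp.
Qed.

End Grid.

Lemma top_entropy_superset_hyperC K : hyperC `<=` K ->
  top_entropy hausdorff_dist (induced_map f) K = +oo%E.
Proof.
move=> CK; apply/eqyP => A A0; have [N N0 lnN] := ln_natS_unbounded (A * (2 * k%:R)).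
have k2 : 0 < 2 * k%:R :> R by rewrite mulr_gt0 ?ltr0n.
apply: le_trans (_ : (ln N.+1%:R / (2 * k%:R))%:E <= _)%E.
  by rewrite lee_fin ler_pdivlMr.
have [eps eps0 sep] := separated_subcontinua N0.
apply: top_entropy_ge k0 _ eps0 _ => // q; have [s sq] := sep q.
by exists s; exact: separated_familyS CK _ sq.
Qed.

End Conjugacy.

Unset Implicit Arguments.

Theorem theorem5p19 (R : realType) (X : metricType R) (f : X -> X)
  (F : R * R -> R * R) :
  [set: X] !=set0 -> compact [set: X] -> connected [set: X] ->
  homeo_on [set: X] [set: X] f ->
  special_dendrite_map F ->
  admits_special_dendrite f F ->
  top_entropy hausdorff_dist (induced_map f) hyperC = +oo%E /\
  top_entropy hausdorff_dist (induced_map f) hyper2 = +oo%E.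
Proof.
move=> _ cX _ _ HF [Lam [k [_ [k0 [Lam_inv [phi [phi_homeo phi_conj]]]]]]].
have [phi_cont [_ [_ [g [g_cont [g_X0 [phiK gK]]]]]]] := phi_homeo.
have [M XM] := compact_mdist_bounded cX.
have entropy_oo := top_entropy_superset_hyperC HF Lam_inv phi_conj phi_cont g_cont g_X0
  phiK gK XM k0.
by split; apply: entropy_oo => //; exact: hyperC_sub_hyper2.
Qed.
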